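(* Let $m,n\in\mathbb N$. Then for all Banach spaces $X,Y$ and all bounded linear operators $T:X\to Y$, $$\tau(T|\mathcal H(\mathbb D_{m+1}^{m+n}))=\tau(T|\mathcal H(\mathbb D_1^n)).$$
   Context: Dyadic intervals: $\Delta_k^{(j)}:=[\frac{j-1}{2^k},\frac{j}{2^k})$. Haar functions: for $k\ge1$, integer $j$, $\chi_k^{(j)}(t)=+2^{(k-1)/2}$ on $\Delta_k^{(2j-1)}$, $-2^{(k-1)/2}$ on $\Delta_k^{(2j)}$, $0$ otherwise, $t\in[0,1)$. $\mathbb D_m^n:=\{(k,j):k=m,\dots,n;\ j=1,\dots,2^{k-1}\}$. For a finite set $\mathbb F$ of such indices and bounded linear $T:X\to Y$, $\tau(T|\mathcal H(\mathbb F))$ is the least $c\ge0$ such that $\|\sum_{(k,j)\in\mathbb F}Tx_k^{(j)}\chi_k^{(j)}|L_2\|\le c(\sum_{(k,j)\in\mathbb F}\|x_k^{(j)}\|^2)^{1/2}$ for all $x_k^{(j)}\in X$, where $\|\cdot|L_2\|$ is the Bochner $L_2([0,1),Y)$ norm. *)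

From HB Require Import structures.
From mathcomp Require Import all_boot all_order all_algebra.
From mathcomp Require Import all_classical all_reals all_analysis.
Set Implicit Arguments. Unset Strict Implicit. Unset Printing Implicit Defensive.
Import Order.TTheory GRing.Theory Num.Theory.
Import numFieldNormedType.Exports.
Local Open Scope classical_set_scope.
Local Open Scope ring_scope.

Section Haar.
Variable R : realType.

Definition dyadic (k i : nat) : set R :=
  `[ (i.-1)%:R / 2 ^+ k, i%:R / 2 ^+ k [%classic.

Definition haar (k j : nat) (t : R) : R :=
  if `[< dyadic k (2 * j).-1 t >] then Num.sqrt (2 ^+ k.-1)
  else if `[< dyadic k (2 * j) t >] then - Num.sqrt (2 ^+ k.-1)
  else 0.

Definition dyadic_indices (m n : nat) : seq (nat * nat) :=
  [seq (k, j) | k <- iota m (n.+1 - m), j <- iota 1 (2 ^ k.-1)].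

Variables (X Y : normedModType R).

Definition L2norm (f : R -> Y) : R :=
  Num.sqrt (fine (\int[lebesgue_measure]_(t in `[0%R, 1%R[%classic)
                    ((`|f t| ^+ 2)%:E))%E).

Definition haar_sum (T : X -> Y) (F : seq (nat * nat)) (x : nat * nat -> X)
  : R -> Y :=
  fun t => \sum_(p <- F) (haar p.1 p.2 t) *: T (x p).

Definition haar_tau (T : X -> Y) (F : seq (nat * nat)) : R :=
  inf [set c : R | 0 <= c /\ forall x : nat * nat -> X,
        L2norm (haar_sum T F x) <= c * Num.sqrt (\sum_(p <- F) `|x p| ^+ 2)].

End Haar.

(* Haar functions of level at most N are constant on the dyadic cells
   [i/2^N, (i+1)/2^N), so the squared L2 norm of a Haar polynomial is a finite
   sum over cells.  On [b/2^m, (b+1)/2^m) the Haar functions of levels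
   m+1..m+n are sqrt(2^m) times translated and dilated copies of those of
   levels 1..n.  Hence the squared norm of a Haar polynomial over D_{m+1}^{m+n}
   is the sum over b < 2^m of the squared norms of the Haar polynomials over
   D_1^n built from the b-th block of coefficients, and the squared norms of
   the coefficients split in the same way.  The two sets of admissible
   constants therefore coincide: summing the blockwise inequalities gives one
   inclusion, putting all coefficients into block 0 gives the other. *)

From mathcomp Require Import all_boot all_order all_algebra.
From mathcomp Require Import all_classical all_reals all_analysis.
From mathcomp Require Import measurable_realfun.
From mathcomp Require Import ring lra zify.
Import Order.TTheory GRing.Theory Num.Theory.
Local Open Scope ring_scope.
Local Open Scope classical_set_scope.

Set Implicit Arguments.
Unset Strict Implicit.
Unset Printing Implicit Defensive.

Section DyadicIndices.
Variable V : nmodType.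

Lemma big_iota_blocks a B L (f : nat -> V) :
  \sum_(j <- iota a (B * L)) f j =
  \sum_(b < B) \sum_(j <- iota a L) f (b * L + j)%N.
Proof.
elim: B => [|B IH]; first by rewrite mul0n big_nil big_ord0.
rewrite mulSnr iotaD big_cat IH big_ord_recr /=; congr (_ + _).
by rewrite addnC iotaDl big_map.
Qed.

Lemma big_dyadic_indices a b (F : nat * nat -> V) :
  \sum_(p <- dyadic_indices a b) F p =
  \sum_(k <- iota a (b.+1 - a)) \sum_(j <- iota 1 (2 ^ k.-1)) F (k, j).
Proof. exact: big_allpairs_dep. Qed.

Lemma big_dyadic_indices_blocks m n (G : nat * nat -> V) :
  \sum_(p <- dyadic_indices m.+1 (m + n)) G p =
  \sum_(b < 2 ^ m) \sum_(p <- dyadic_indices 1 n) G (m + p.1, b * 2 ^ p.1.-1 + p.2)%N.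
Proof.
rewrite big_dyadic_indices; under [RHS]eq_bigr do rewrite big_dyadic_indices.
rewrite exchange_big /= subSS subn1 -addnBAC // subnn add0n /=.
rewrite -[m.+1]addn1 iotaDl big_map big_seq [RHS]big_seq; apply: eq_bigr => k.
rewrite mem_iota => /andP[k1 _] /=.
by rewrite -[in (m + k).-1](prednK k1) addnS expnD big_iota_blocks.
Qed.

End DyadicIndices.

Lemma mem_dyadic_indices a b (p : nat * nat) : p \in dyadic_indices a b ->
  [/\ a <= p.1 <= b, 0 < p.2 & p.2 <= 2 ^ p.1.-1]%N.
Proof.
move=> /allpairsPdep[k [j [+ + ->]]]; rewrite !mem_iota /=.
move=> /andP[ak kb] /andP[j1 jk]; split => //; lia.
Qed.

Lemma dyadic_indices_le a b : {in dyadic_indices a b, forall p, p.1 <= b}%N.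
Proof. by move=> p /mem_dyadic_indices[/andP[]]. Qed.

Section DyadicCells.
Variable R : realType.

Definition dyadic_floor (N : nat) (t : R) : R :=
  (Num.truncn (t * 2 ^+ N))%:R / 2 ^+ N.

Definition dyadic_sum (N : nat) (g : R -> R) : R :=
  \sum_(i < 2 ^ N) g (i%:R / 2 ^+ N) / 2 ^+ N.

Lemma in_dyadicE k i (t : R) :
  `[< dyadic k i t >] = ((i.-1)%:R <= t * 2 ^+ k < i%:R).
Proof.
have P0 : (0 : R) < 2 ^+ k by apply: exprn_gt0.
by rewrite asboolb in_itv /= ler_pdivrMr // ltr_pdivlMr.
Qed.

Lemma in_dyadic_truncn N i (t : R) : 0 <= t ->
  `[< dyadic N i.+1 t >] = (Num.truncn (t * 2 ^+ N) == i).
Proof.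
by move=> t0; rewrite in_dyadicE truncn_eq // mulr_ge0 // exprn_ge0.
Qed.

Lemma in_dyadic_refine k N i (t : R) : (k <= N)%N -> 0 <= t ->
  `[< dyadic k i t >] =
  (i.-1 * 2 ^ (N - k) <= Num.truncn (t * 2 ^+ N) < i * 2 ^ (N - k))%N.
Proof.
move=> kN t0; have P0 : (0 : R) < 2 ^+ (N - k) by apply: exprn_gt0.
have EN : (2 : R) ^+ N = 2 ^+ k * 2 ^+ (N - k) by rewrite -exprD subnKC.
rewrite in_dyadicE truncn_ge_nat ?truncn_lt_nat ?mulr_ge0 ?exprn_ge0 //.
by rewrite !natrM natrX EN mulrA ler_pM2r // ltr_pM2r.
Qed.

Lemma haar_dyadic_floor k j N (t : R) : (k <= N)%N -> 0 <= t ->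
  haar k j (dyadic_floor N t) = haar k j t.
Proof.
move=> kN t0; have P0 : (0 : R) < 2 ^+ N by apply: exprn_gt0.
have q0 : 0 <= dyadic_floor N t by rewrite divr_ge0 // ltW.
rewrite /haar !(in_dyadic_refine _ kN t0) !(in_dyadic_refine _ kN q0).
by rewrite /dyadic_floor divfK ?gt_eqF // natrK.
Qed.

Lemma lebesgue_measure_dyadic N i :
  lebesgue_measure (dyadic (R := R) N i.+1) = (2 ^+ N)^-1%:E.
Proof.
have P0 : (0 : R) < 2 ^+ N by apply: exprn_gt0.
rewrite lebesgue_measure_itv /= lte_fin ltr_pM2r ?invr_gt0 // ltr_nat ltnSn.
by rewrite -EFinB -mulrBl -natrB // subSnn mul1r.
Qed.

Lemma dyadic_sub_unit N (i : 'I_(2 ^ N)) :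
  dyadic N i.+1 `<=` (`[0, 1[ : set R).
Proof.
have P0 : (0 : R) < 2 ^+ N by apply: exprn_gt0.
move=> t; rewrite /dyadic /= !in_itv /= => /andP[ge lt]; apply/andP; split.
  by apply: le_trans ge; rewrite divr_ge0 // ltW.
apply: (lt_le_trans lt); rewrite ler_pdivrMr // mul1r -natrX ler_nat.
exact: ltn_ord.
Qed.

Section StepFunction.
Variables (N : nat) (g : R -> R).
Hypothesis g_ge0 : forall t, 0 <= g t.
Hypothesis g_step : forall t, 0 <= t -> g (dyadic_floor N t) = g t.

Lemma dyadic_step_indicE (t : R) : 0 <= t < 1 ->
  g t = \sum_(i < 2 ^ N) g (i%:R / 2 ^+ N) * \1_(dyadic N i.+1) t.
Proof.
move=> /andP[t0 t1].
have qlt : (Num.truncn (t * 2 ^+ N) < 2 ^ N)%N.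
  by rewrite truncn_lt_nat ?mulr_ge0 ?exprn_ge0 // natrX gtr_pMl ?exprn_gt0.
rewrite (bigD1 (Ordinal qlt)) //= big1 => [|i /eqP ne];
  rewrite indicE -[_ \in _]/(`[< dyadic N _ t >]) in_dyadic_truncn //.
  by rewrite eqxx mulr1 addr0 g_step.
by case: eqP => [e|_]; [case: ne; apply: val_inj | rewrite mulr0].
Qed.

Lemma integral_dyadic_step :
  (\int[lebesgue_measure]_(t in `[0%R, 1%R[) (g t)%:E = (dyadic_sum N g)%:E)%E.
Proof.
have mI : measurable (`[0, 1[ : set R) by exact: measurable_itv.
transitivity (\int[lebesgue_measure]_(t in `[0%R, 1%R[)
    (\sum_(i < 2 ^ N) (g (i%:R / 2 ^+ N) * \1_(dyadic N i.+1) t)%:E))%E.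
  apply: eq_integral => t; rewrite inE /= in_itv /= => t01.
  by rewrite sumEFin -dyadic_step_indicE.
rewrite ge0_integral_sum //; last first.
- by move=> i t _; rewrite lee_fin mulr_ge0.
- move=> i; apply/measurable_EFinP/measurable_funM; first exact: measurable_cst.
  by apply: measurable_indic; exact: measurable_itv.
rewrite -sumEFin; apply: eq_bigr => i _.
have /= -> := integralZl_indic (m := lebesgue_measure) mI
  (fun _ => dyadic N i.+1) (g (i%:R / 2 ^+ N)); last 2 first.
- by rewrite ltNge g_ge0.
- exact: measurable_itv.
rewrite integral_indic //; last exact: measurable_itv.
rewrite setIidl; last exact: dyadic_sub_unit.
by rewrite EFinM; congr (_ * _)%E; exact: lebesgue_measure_dyadic.
Qed.

End StepFunction.

Lemma sum_dyadic_points_blocks m n (g : R -> R) :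
  \sum_(i < 2 ^ (m + n)) g (i%:R / 2 ^+ (m + n)) =
  \sum_(b < 2 ^ m) \sum_(r < 2 ^ n) g ((b%:R + r%:R / 2 ^+ n) / 2 ^+ m).
Proof.
have m0 : (2 : R) ^+ m != 0 by rewrite expf_neq0 // pnatr_eq0.
have n0 : (2 : R) ^+ n != 0 by rewrite expf_neq0 // pnatr_eq0.
rewrite -(big_mkord xpredT (fun i => g (i%:R / _))) /index_iota subn0.
rewrite expnD big_iota_blocks; apply: eq_bigr => b _.
rewrite -(big_mkord xpredT (fun r => g ((b%:R + r%:R / _) / _))) /index_iota subn0.
apply: eq_bigr => r _; congr g.
by rewrite natrD natrM natrX exprD; field; rewrite m0 n0.
Qed.

Lemma in_dyadic_shift m k b b' i (s : R) : (i < 2 ^ k)%N -> 0 <= s < 1 ->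
  `[< dyadic (m + k) (b' * 2 ^ k + i.+1) ((b%:R + s) / 2 ^+ m) >] =
  (b' == b) && `[< dyadic k i.+1 s >].
Proof.
move=> ik /andP[s0 s1].
have Pm : (0 : R) < 2 ^+ m by apply: exprn_gt0.
have Pk : (0 : R) < 2 ^+ k by apply: exprn_gt0.
rewrite !in_dyadicE exprD mulrA (divfK (lt0r_neq0 Pm)) mulrDl addnS /=.
rewrite -[(b' * 2 ^ k + i).+1%:R]natr1 -[i.+1%:R]natr1 natrD natrM natrX.
have u0 : 0 <= s * 2 ^+ k by rewrite mulr_ge0 // ltW.
have uP : s * 2 ^+ k < 2 ^+ k by rewrite gtr_pMl.
have iP : i%:R + 1 <= (2 : R) ^+ k by rewrite natr1 -natrX ler_nat.
move: u0 uP iP; set u := s * 2 ^+ k; set P := (2 : R) ^+ k => u0 uP iP.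
case: eqVneq => [->|ne] /=; first by rewrite -addrA lerD2l ltrD2l.
apply/negbTE/negP => /andP[lo hi].
have [lt|gt] : (b' < b)%N \/ (b < b')%N by lia.
  have : b'.+1%:R * P <= b%:R * P by rewrite ler_pM2r // ler_nat.
  rewrite -natr1 mulrDl mul1r; lra.
have : b.+1%:R * P <= b'%:R * P by rewrite ler_pM2r // ler_nat.
have := ler0n R i; rewrite -natr1 mulrDl mul1r; lra.
Qed.

Lemma haar_shift m k b b' j (s : R) : (0 < k)%N -> (j < 2 ^ k.-1)%N ->
  0 <= s < 1 ->
  haar (m + k) (b' * 2 ^ k.-1 + j.+1) ((b%:R + s) / 2 ^+ m) =
  if b' == b then Num.sqrt (2 ^+ m) * haar k j.+1 s else 0.
Proof.
move=> k0 jk s01; have ek : (2 ^ k = 2 * 2 ^ k.-1)%N by rewrite -expnS prednK.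
have e1 : ((2 * (b' * 2 ^ k.-1 + j.+1)).-1 = b' * 2 ^ k + (2 * j).+1)%N.
  by rewrite ek; set L := (2 ^ k.-1)%N; nia.
have e2 : (2 * (b' * 2 ^ k.-1 + j.+1) = b' * 2 ^ k + (2 * j + 1).+1)%N.
  by rewrite ek; set L := (2 ^ k.-1)%N; nia.
have f1 : ((2 * j.+1).-1 = (2 * j).+1)%N by lia.
have f2 : (2 * j.+1 = (2 * j + 1).+1)%N by lia.
rewrite /haar e1 e2 f1 f2 !in_dyadic_shift // ?ek; try lia.
case: eqVneq => [_|_] //=.
rewrite -[in (m + k).-1](prednK k0) addnS exprD sqrtrM ?exprn_ge0 //.
by case: ifP => _; [|case: ifP => _]; rewrite ?mulrN ?mulr0.
Qed.

End DyadicCells.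

Lemma ler_mul_sqrt (R : rcfType) (a c N : R) : 0 <= a -> 0 <= c -> 0 <= N ->
  (a <= c * Num.sqrt N) = (a ^+ 2 <= c ^+ 2 * N).
Proof.
move=> a0 c0 N0.
by rewrite -ler_sqr ?nnegrE ?mulr_ge0 ?sqrtr_ge0 // exprMn sqr_sqrtr.
Qed.

Section HaarPolynomials.
Variables (R : realType) (X Y : normedModType R) (T : X -> Y).

Definition haar_bounds (F : seq (nat * nat)) : set R :=
  [set c | 0 <= c /\ forall x : nat * nat -> X,
     L2norm (haar_sum T F x) <= c * Num.sqrt (\sum_(p <- F) `|x p| ^+ 2)].

(* The b-th block of coefficients: the Haar functions of D_(m+1)^(m+n)
   supported in [b/2^m, (b+1)/2^m) are those of index (m + k, b 2^(k-1) + j). *)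
Definition haar_block m (x : nat * nat -> X) (b : nat) : nat * nat -> X :=
  fun p => x (m + p.1, b * 2 ^ p.1.-1 + p.2)%N.

Definition haar_embed m (x : nat * nat -> X) : nat * nat -> X :=
  fun p => if ((m < p.1) && (p.2 <= 2 ^ (p.1 - m).-1))%N then x (p.1 - m, p.2)%N
           else 0.

Lemma sumsq_ge0 F (x : nat * nat -> X) : 0 <= \sum_(p <- F) `|x p| ^+ 2.
Proof. by apply: sumr_ge0 => p _; apply: sqr_ge0. Qed.

Lemma eq_in_haar_sum F x x' : {in F, x =1 x'} ->
  haar_sum T F x = haar_sum T F x'.
Proof. by move=> xx'; apply: funext => t; apply: eq_big_seq => p /xx' ->. Qed.

Lemma haar_sum0 F : T 0 = 0 -> haar_sum T F (fun=> 0) = fun=> 0.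
Proof.
by move=> T0; apply: funext => t; apply: big1 => p _; rewrite T0 scaler0.
Qed.

Lemma L2norm0 : L2norm (fun _ : R => 0 : Y) = 0.
Proof.
rewrite /L2norm; under eq_integral do rewrite normr0 expr0n.
by rewrite integral0 sqrtr0.
Qed.

Lemma haar_sum_dyadic_floor N F x t : {in F, forall p, p.1 <= N}%N -> 0 <= t ->
  haar_sum T F x (dyadic_floor N t) = haar_sum T F x t.
Proof.
by move=> FN t0; apply: eq_big_seq => p /FN pN; rewrite haar_dyadic_floor.
Qed.

Lemma sqr_L2norm_haar_sum N F x : {in F, forall p, p.1 <= N}%N ->
  L2norm (haar_sum T F x) ^+ 2 = dyadic_sum N (fun t => `|haar_sum T F x t| ^+ 2).
Proof.
move=> FN; rewrite /L2norm (@integral_dyadic_step _ N) /=.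
- by rewrite sqr_sqrtr // sumr_ge0 // => i _; rewrite divr_ge0 ?sqr_ge0 ?exprn_ge0.
- by move=> t; apply: sqr_ge0.
- by move=> t t0; rewrite haar_sum_dyadic_floor.
Qed.

Lemma haar_sum_block m n x (b : 'I_(2 ^ m)) s : 0 <= s < 1 ->
  haar_sum T (dyadic_indices m.+1 (m + n)) x ((b%:R + s) / 2 ^+ m) =
  Num.sqrt (2 ^+ m) *: haar_sum T (dyadic_indices 1 n) (haar_block m x b) s.
Proof.
move=> s01; rewrite /haar_sum big_dyadic_indices_blocks (bigD1 b) //=.
rewrite [X in _ + X]big1 ?addr0 => [|b' nb].
  rewrite scaler_sumr; apply: eq_big_seq => -[k [|j]].
    by case/mem_dyadic_indices.
  case/mem_dyadic_indices => /andP[k1 _] _ jk.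
  by rewrite haar_shift // eqxx scalerA.
apply: big1_seq => -[k [|j]] /mem_dyadic_indices[/andP[k1 _] // _ jk].
by rewrite haar_shift // val_eqE (negbTE nb) scale0r.
Qed.

Lemma sqr_L2norm_haar_sum_blocks m n x :
  L2norm (haar_sum T (dyadic_indices m.+1 (m + n)) x) ^+ 2 =
  \sum_(b < 2 ^ m) L2norm (haar_sum T (dyadic_indices 1 n) (haar_block m x b)) ^+ 2.
Proof.
have Pm : (0 : R) < 2 ^+ m by apply: exprn_gt0.
have Pn : (0 : R) < 2 ^+ n by apply: exprn_gt0.
rewrite (sqr_L2norm_haar_sum _ (@dyadic_indices_le _ _)).
under eq_bigr do rewrite (sqr_L2norm_haar_sum _ (@dyadic_indices_le _ _)).
rewrite /dyadic_sum (sum_dyadic_points_blocks m n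
  (fun t => `|haar_sum T (dyadic_indices m.+1 (m + n)) x t| ^+ 2 / 2 ^+ (m + n))).
apply: eq_bigr => b _; apply: eq_bigr => r _.
have r01 : 0 <= (r%:R / 2 ^+ n : R) < 1.
  by rewrite divr_ge0 ?exprn_ge0 //= ltr_pdivrMr // mul1r -natrX ltr_nat.
rewrite haar_sum_block // normrZ exprMn ger0_norm ?sqrtr_ge0 // sqr_sqrtr ?ltW //.
by rewrite exprD; field; rewrite !gt_eqF.
Qed.

Lemma haar_block_embed m n x b :
  {in dyadic_indices 1 n,
    haar_block m (haar_embed m x) b =1 if b == 0%N then x else fun=> 0}.
Proof.
move=> [k j] /mem_dyadic_indices[/andP[/= k1 _] /= j0 jk].
rewrite /haar_block /haar_embed /= addKn.
have -> : (m < m + k)%N by rewrite -[X in (X < _)%N]addn0 ltn_add2l.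
case: b => [|b] /=; first by rewrite mul0n add0n jk.
suff -> : (b.+1 * 2 ^ k.-1 + j <= 2 ^ k.-1)%N = false by [].
by set L := (2 ^ k.-1)%N; nia.
Qed.

Lemma sum_haar_blocks_embed m n x (phi : (nat * nat -> X) -> R) :
  (forall y y', {in dyadic_indices 1 n, y =1 y'} -> phi y = phi y') ->
  phi (fun=> 0) = 0 ->
  \sum_(b < 2 ^ m) phi (haar_block m (haar_embed m x) b) = phi x.
Proof.
move=> phi_in phi0; have e0 : (0 < 2 ^ m)%N by rewrite expn_gt0.
rewrite (bigD1 (Ordinal e0)) //= [X in _ + X]big1 ?addr0 => [|b nb].
  by apply: phi_in => p /(haar_block_embed m x 0).
rewrite -phi0; apply: phi_in => p /(haar_block_embed m x b) ->.
by move: nb; rewrite -val_eqE /= => /negbTE ->.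
Qed.

Lemma haar_bounds_blocks_sub m n :
  haar_bounds (dyadic_indices 1 n) `<=` haar_bounds (dyadic_indices m.+1 (m + n)).
Proof.
move=> c [c0 bound]; split=> // x.
rewrite ler_mul_sqrt ?sqrtr_ge0 ?sumsq_ge0 //.
rewrite sqr_L2norm_haar_sum_blocks big_dyadic_indices_blocks mulr_sumr.
apply: ler_sum => b _; have := bound (haar_block m x b).
by rewrite ler_mul_sqrt ?sqrtr_ge0 ?sumsq_ge0.
Qed.

Lemma haar_bounds_embed_sub m n : T 0 = 0 ->
  haar_bounds (dyadic_indices m.+1 (m + n)) `<=` haar_bounds (dyadic_indices 1 n).
Proof.
move=> T0 c [c0 bound]; split=> // x; have := bound (haar_embed m x).
rewrite !ler_mul_sqrt ?sqrtr_ge0 ?sumsq_ge0 //.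
rewrite sqr_L2norm_haar_sum_blocks big_dyadic_indices_blocks.
rewrite (@sum_haar_blocks_embed m n x (fun y => L2norm (haar_sum T _ y) ^+ 2)).
- rewrite (@sum_haar_blocks_embed m n x (fun y => \sum_(p <- _) `|y p| ^+ 2)) //.
  + by move=> y y' yy'; apply: eq_big_seq => p /yy' ->.
  + by rewrite big1 // => p _; rewrite normr0 expr0n.
- by move=> y y' /eq_in_haar_sum ->.
- by rewrite haar_sum0 // L2norm0 expr0n.
Qed.

Lemma haar_bounds_shift m n : T 0 = 0 ->
  haar_bounds (dyadic_indices m.+1 (m + n)) = haar_bounds (dyadic_indices 1 n).
Proof.
move=> T0; apply/seteqP; split.
  exact: haar_bounds_embed_sub.
exact: haar_bounds_blocks_sub.
Qed.

End HaarPolynomials.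

Theorem corollary3p12 (R : realType) (m n : nat)
  (X Y : completeNormedModType R) (T : {linear X -> Y})
  (hT : exists M : R, forall x : X, `|T x| <= M * `|x|) :
  haar_tau T (dyadic_indices (m.+1) (m + n)) = haar_tau T (dyadic_indices 1 n).
Proof.
by congr inf; apply: haar_bounds_shift; apply: linear0.
Qed.
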